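(* Let $q$ be a prime power and let $n,k$ be integers with $3\le k\le n-2\le q-2$. Let $\Lambda=\{\alpha_1,\dots,\alpha_n\}\subseteq\mathbb{F}_q$ with the $\alpha_i$ pairwise distinct, and let $C_{k-1,k-2}$ be the linear code generated by the $k\times n$ matrix whose rows are $(\alpha_1^{e},\dots,\alpha_n^{e})$ for $e=0,1,\dots,k-3,k,k+1$. Then $C_{k-1,k-2}$ is MDS if and only if $$S_2(\beta_1,\dots,\beta_k)^2-S_1(\beta_1,\dots,\beta_k)S_3(\beta_1,\dots,\beta_k)\neq 0$$ for every $k$-element subset $\{\beta_1,\dots,\beta_k\}\subseteq\Lambda$ (with the $\beta_i$ distinct).
   Context: Convention: $0^0=1$. $S_t(x_1,\dots,x_m)=\sum_{t_1+\dots+t_m=t,\ t_i\ge0}x_1^{t_1}\cdots x_m^{t_m}$ is the complete homogeneous symmetric polynomial of degree $t$. An $[n,k,d]$ linear code is MDS if $d=n-k+1$. *)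

From HB Require Import structures.
From mathcomp Require Import all_boot all_order all_algebra all_field.
Set Implicit Arguments. Unset Strict Implicit. Unset Printing Implicit Defensive.
Import GRing.Theory.
Local Open Scope ring_scope.

(* Complete homogeneous symmetric polynomial of degree t evaluated at
   x_1..x_m: sum over (t_1..t_m) with t_i >= 0, sum t_i = t, of prod x_i^t_i
   (exponents t_i <= t, so ranging over 'I_t.+1 loses nothing). 0^0 = 1. *)
Definition hsym (F : comRingType) (m t : nat) (x : 'I_m -> F) : F :=
  \sum_(e : {ffun 'I_m -> 'I_t.+1} | (\sum_(i < m) (e i : nat) == t)%N)
     \prod_(i < m) x i ^+ (e i).

Definition hweight (F : fieldType) (n : nat) (v : 'rV[F]_n) : nat :=
  #|[set j : 'I_n | v 0 j != 0]|.

(* Minimum distance of the code spanned by the rows of G (minimum weight of a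
   nonzero codeword u *m G); defaults to n if there is no nonzero codeword. *)
Definition min_dist (F : finFieldType) (k n : nat) (G : 'M[F]_(k, n)) : nat :=
  \big[minn/n]_(u : 'rV[F]_k | u *m G != 0) hweight (u *m G).

Definition is_MDS (F : finFieldType) (k n : nat) (G : 'M[F]_(k, n)) : Prop :=
  min_dist G = (n - \rank G + 1)%N.

Definition gen_mx (F : fieldType) (k n : nat) (alpha : 'I_n -> F) : 'M[F]_(k, n) :=
  \matrix_(i < k, j < n) alpha j ^+ (if (i < k - 2)%N then (i : nat) else (i + 2)%N).

From HB Require Import structures.
From mathcomp Require Import all_boot all_order all_algebra all_field.
From mathcomp Require Import ring zify.
Set Implicit Arguments. Unset Strict Implicit. Unset Printing Implicit Defensive.
Import GRing.Theory.
Local Open Scope ring_scope.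

(* The codeword u *m gen_mx k alpha is the vector of values at the alpha_j of
   p = sum_r u_r X^(e_r), with e_r ranging over 0, ..., k-3, k, k+1; these p
   are exactly the polynomials of degree at most k + 1 whose coefficients of
   X^(k-2) and X^(k-1) vanish.  The code is MDS iff every k columns are
   independent, i.e. iff no nonzero such p vanishes at k distinct points
   beta_i.  A polynomial of degree at most k + 1 vanishing there is
   (x + y X) prod_i (X - beta_i), and the two vanishing coefficients form a
   2 x 2 linear system in (x, y) with determinant e_2^2 - e_1 e_3.  Since
   prod_i (1 - beta_i X) inverts sum_t h_t X^t, Newton's identities give
   e_2^2 - e_1 e_3 = h_2^2 - h_1 h_3. *)

Section SymmetricFunctions.
Variable R : comNzRingType.

Definition hsym_gf N k (b : 'I_k -> R) : {poly R} :=
  \prod_(i < k) \sum_(j < N.+1) b i ^+ j *: 'X^j.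

Definition esym_gf k (b : 'I_k -> R) : {poly R} := \prod_(i < k) (1 - (b i)%:P * 'X).

Definition roots_poly k (b : 'I_k -> R) : {poly R} := \prod_(i < k) ('X - (b i)%:P).

(* The Schur polynomial s_(2,2) = e_2^2 - e_1 e_3, where e_j = (-1)^j (esym_gf b)`_j. *)
Definition schur22 k (b : 'I_k -> R) : R :=
  (esym_gf b)`_2 ^+ 2 - (esym_gf b)`_1 * (esym_gf b)`_3.

Lemma coef_hsym_gf N k (b : 'I_k -> R) t : (t <= N)%N -> (hsym_gf N b)`_t = hsym t b.
Proof.
move=> letN; rewrite /hsym_gf bigA_distr_bigA /=.
have monomialE (f : {ffun 'I_k -> 'I_N.+1}) :
    \prod_i (b i ^+ f i *: 'X^(f i)) = (\prod_i b i ^+ f i) *: 'X^(\sum_i (f i : nat)).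
  rewrite -mul_polyC rmorph_prod -prodrXr -big_split /=.
  by apply: eq_bigr => i _; rewrite mul_polyC.
under eq_bigr do rewrite monomialE.
rewrite coef_sumMXn /hsym.
have ltN : (t.+1 <= N.+1)%N by [].
pose widen (g : {ffun 'I_k -> 'I_t.+1}) := [ffun i => widen_ord ltN (g i)].
pose narrow (f : {ffun 'I_k -> 'I_N.+1}) : {ffun 'I_k -> 'I_t.+1} :=
  [ffun i => inord (f i)].
rewrite (reindex_onto widen narrow) => [|f /eqP sum_f]; last first.
  apply/ffunP => i; rewrite !ffunE; apply/val_inj; rewrite /= inordK // ltnS -sum_f.
  by rewrite (bigD1 i) //= leq_addr.
apply: eq_big => [g|g _]; last by apply: eq_bigr => i _; rewrite ffunE.
have -> : narrow (widen g) == g.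
  by apply/eqP/ffunP => i; rewrite !ffunE; apply/val_inj; rewrite /= inordK.
by rewrite andbT; under eq_bigr do rewrite ffunE.
Qed.

Lemma prod_1_modXn n I (r : seq I) (G : I -> {poly R}) :
  (forall i, exists q, G i = 1 + 'X^n * q) ->
  exists q, \prod_(i <- r) G i = 1 + 'X^n * q.
Proof.
move=> G1; apply: (big_ind (fun p => exists q, p = 1 + 'X^n * q)) => //.
- by exists 0; rewrite mulr0 addr0.
- by move=> _ _ [q1 ->] [q2 ->]; exists (q1 + q2 + 'X^n * q1 * q2); ring.
Qed.

Lemma esym_gfM_hsym_gf N k (b : 'I_k -> R) :
  exists q, esym_gf b * hsym_gf N b = 1 + 'X^(N.+1) * q.
Proof.
rewrite /esym_gf /hsym_gf -big_split /=; apply: prod_1_modXn => i.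
have -> : \sum_(j < N.+1) b i ^+ j *: 'X^j = \sum_(j < N.+1) ((b i)%:P * 'X) ^+ j.
  by apply: eq_bigr => j _; rewrite exprMn -polyC_exp mul_polyC.
rewrite -opprB mulNr -subrX1 opprB exprMn -polyC_exp.
by exists (- (b i ^+ N.+1)%:P); rewrite mulrN mulrC.
Qed.

Lemma coef0_esym_gf k (b : 'I_k -> R) : (esym_gf b)`_0 = 1.
Proof.
have [q ->] : exists q, esym_gf b = 1 + 'X^1 * q.
  by apply: prod_1_modXn => i; exists (- (b i)%:P); ring.
by rewrite coefD coef1 coefXnM addr0.
Qed.

Lemma size_roots_poly k (b : 'I_k -> R) : size (roots_poly b) = k.+1.
Proof. by rewrite /roots_poly -big_enum /= size_prod_XsubC size_enum_ord. Qed.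

Lemma root_roots_poly k (b : 'I_k -> R) i : root (roots_poly b) (b i).
Proof. by rewrite /root /roots_poly horner_prod (bigD1 i) //= hornerXsubC subrr mul0r. Qed.

Lemma coef_esym_gf k (b : 'I_k -> R) j :
  (esym_gf b)`_j = if (j <= k)%N then (roots_poly b)`_(k - j) else 0.
Proof.
elim: k b j => [|k IH] b j.
  by rewrite /esym_gf /roots_poly !big_ord0; case: j => [|j]; rewrite !coef1.
have := IH (fun i => b (lift ord0 i)).
have := size_roots_poly (fun i => b (lift ord0 i)).
rewrite /esym_gf /roots_poly !big_ord_recl /=.
set c := b ord0; set E := \prod_(i < k) (1 - _); set V := \prod_(i < k) ('X - _).
move=> sizeV coefE.
rewrite mulrBl mul1r coefB -mulrA coefCM coefXM mulrBl coefB coefXM coefCM.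
case: j => [|j] /=.
  by rewrite coefE subn0 leq0n (@nth_default _ 0 V k.+1) ?sizeV ?mulr0 ?subr0.
rewrite !coefE subSS ltnS; case: (ltngtP j k) => [ltjk|ltkj|->].
- by rewrite subn_eq0 leqNgt ltjk /= subnS.
- by rewrite mulr0 subr0.
- by rewrite subnn.
Qed.

Lemma hsym_schur22 k (b : 'I_k -> R) :
  hsym 2 b ^+ 2 - hsym 1 b * hsym 3 b = schur22 b.
Proof.
rewrite /schur22 -!(coef_hsym_gf (N := 3) b) //.
have [q EH] := esym_gfM_hsym_gf 3 b.
have coefEH t : (t < 4)%N ->
    \sum_(i < t.+1) (esym_gf b)`_i * (hsym_gf 3 b)`_(t - i) = (t == 0)%:R.
  by move=> lt_t4; rewrite -coefM EH coefD coef1 coefXnM lt_t4 addr0.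
have /eqP := coefEH 0%N isT; have /eqP := coefEH 1%N isT.
have /eqP := coefEH 2%N isT; have /eqP := coefEH 3%N isT.
rewrite !big_ord_recl !big_ord0 /bump /= coef0_esym_gf !mul1r !addr0 !addr_eq0.
by move=> /eqP-> /eqP-> /eqP-> /eqP->; ring.
Qed.

End SymmetricFunctions.

Lemma det2_eq0P (F : fieldType) (a b c d : F) :
  (exists x y, [/\ (x != 0) || (y != 0), a * x + b * y = 0 & c * x + d * y = 0])
  <-> a * d - b * c = 0.
Proof.
split=> [[x [y [/orP[x0|y0] eq1 eq2]]]|det0].
- apply: (mulfI x0); rewrite mulr0.
  have -> : x * (a * d - b * c) = d * (a * x + b * y) - b * (c * x + d * y) by ring.
  by rewrite eq1 eq2 !mulr0 subrr.
- apply: (mulfI y0); rewrite mulr0.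
  have -> : y * (a * d - b * c) = a * (c * x + d * y) - c * (a * x + b * y) by ring.
  by rewrite eq1 eq2 !mulr0 subrr.
have [/andP[/eqP-> /eqP->]|ab0] := boolP ((a == 0) && (b == 0)).
  have [d0|d0] := eqVneq d 0.
    by exists 0, 1; rewrite oner_eq0 orbT d0; split=> //; ring.
  by exists d, (- c); rewrite d0; split=> //; ring.
exists b, (- a); rewrite oppr_eq0 orbC -negb_and ab0; split=> //; first ring.
by rewrite -oppr0 -det0; ring.
Qed.

Section GapPolynomials.
Variable F : fieldType.

Lemma size_linear_poly (x y : F) : (size (x%:P + y%:P * 'X)%R <= 2)%N.
Proof. by apply/leq_sizeP => -[|[|j]] // _; rewrite coefD coefC coefCM coefX mulr0 addr0. Qed.

Lemma coef_linear_polyM (x y : F) (p : {poly F}) i : (0 < i)%N ->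
  ((x%:P + y%:P * 'X) * p)`_i = x * p`_i + y * p`_i.-1.
Proof. by rewrite mulrDl coefD coefCM -mulrA coefCM coefXM; case: i. Qed.

Lemma roots_poly_factor k (b : 'I_k -> F) (p : {poly F}) :
  injective b -> (forall i, root p (b i)) -> (size p <= k + 2)%N ->
  exists x y, p = (x%:P + y%:P * 'X) * roots_poly b.
Proof.
move=> inj_b rootp size_p.
have [q pE] : exists q, p = q * roots_poly b.
  rewrite /roots_poly -big_enum -(big_map b predT (fun z => 'X - z%:P)).
  apply: uniq_roots_prod_XsubC.
    by apply/allP => _ /mapP[i _ ->]; apply: rootp.
  by rewrite uniq_rootsE map_inj_uniq ?enum_uniq.
exists q`_0, q`_1; rewrite pE; congr (_ * _).
have size_q : (size q <= 2)%N.
  have [->|q0] := eqVneq q 0; first by rewrite size_poly0.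
  move: size_p; rewrite pE size_Mmonic ?monic_prod_XsubC //.
  by rewrite size_roots_poly addnS addnC leq_add2l.
apply/polyP => -[|[|i]]; rewrite coefD coefC coefCM coefX ?mulr0 ?mulr1 ?addr0 ?add0r //.
by rewrite nth_default //; apply: leq_trans size_q _.
Qed.

Section GapExponents.
Variable k : nat.

Definition gen_exp (r : nat) : nat := if (r < k - 2)%N then r else (r + 2)%N.

Definition gen_poly (u : 'rV[F]_k) : {poly F} := \sum_(r < k) u 0 r *: 'X^(gen_exp r).

Definition gap_poly (p : {poly F}) : bool :=
  [&& (size p <= k + 2)%N, p`_(k - 2) == 0 & p`_(k - 1) == 0].

Lemma gen_exp_inj : injective gen_exp.
Proof. by move=> r s; rewrite /gen_exp; case: ifP; case: ifP; lia. Qed.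

Lemma coef_gen_poly u i :
  (gen_poly u)`_i = \sum_(r < k | gen_exp r == i) u 0 r.
Proof. exact: coef_sumMXn. Qed.

Lemma coef_gen_poly_exp u (r : 'I_k) : (gen_poly u)`_(gen_exp r) = u 0 r.
Proof.
rewrite coef_gen_poly (big_pred1 r) // => s.
by apply/eqP/eqP => [/gen_exp_inj/val_inj|->].
Qed.

Lemma gen_poly_eq0 u : (gen_poly u == 0) = (u == 0).
Proof.
apply/eqP/eqP => [u0|->]; last by rewrite /gen_poly big1 // => r _; rewrite mxE scale0r.
by apply/rowP => r; rewrite mxE -coef_gen_poly_exp u0 coef0.
Qed.

Hypothesis k_ge2 : (2 <= k)%N.

Lemma gen_expP i :
  (exists r : 'I_k, gen_exp r = i) <-> ((i < k - 2) || (k <= i < k + 2))%N.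
Proof.
split=> [[r <-]|].
  by have := ltn_ord r; rewrite /gen_exp; case: ifP; lia.
case: (ltnP i (k - 2)) => [lt_i /= _|le_i /andP[ge_i lt_i]].
  by exists (Ordinal (leq_trans lt_i (leq_subr 2 k))); rewrite /gen_exp lt_i.
have lt_r : (i - 2 < k)%N by lia.
by exists (Ordinal lt_r); rewrite /gen_exp /=; case: ifP; lia.
Qed.

Lemma coef_gen_poly_gap u i :
  ~~ ((i < k - 2) || (k <= i < k + 2))%N -> (gen_poly u)`_i = 0.
Proof.
move=> gap_i; rewrite coef_gen_poly big_pred0 // => r.
by apply: contraNF gap_i => /eqP ri; apply/gen_expP; exists r.
Qed.

Lemma gen_polyP p : reflect (exists u, p = gen_poly u) (gap_poly p).
Proof.
apply: (iffP and3P) => [[size_p /eqP p_k2 /eqP p_k1]|[u ->]].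
  exists (\row_r p`_(gen_exp r)); apply/polyP => i.
  have [/gen_expP[r <-]|gap_i] := boolP ((i < k - 2) || (k <= i < k + 2))%N.
    by rewrite coef_gen_poly_exp mxE.
  rewrite coef_gen_poly_gap //.
  have [->|[->|le_i]] : i = (k - 2)%N \/ i = (k - 1)%N \/ (k + 2 <= i)%N by lia.
  - exact: p_k2.
  - exact: p_k1.
  - by apply: nth_default; apply: leq_trans size_p le_i.
split.
- apply/leq_sizeP => i le_i; apply: coef_gen_poly_gap; lia.
- by rewrite coef_gen_poly_gap //; lia.
- by rewrite coef_gen_poly_gap //; lia.
Qed.

End GapExponents.

Lemma gap_poly_vanishingP k (b : 'I_k -> F) : (3 <= k)%N -> injective b ->
  (exists2 p, p != 0 & gap_poly k p /\ forall i, root p (b i)) <-> schur22 b = 0.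
Proof.
move=> k_ge3 inj_b.
have coefV j : (0 < j <= 3)%N -> (roots_poly b)`_(k - j) = (esym_gf b)`_j.
  by case/andP=> _ le_j3; rewrite coef_esym_gf (leq_trans le_j3 k_ge3).
have gap_linearM x y : gap_poly k ((x%:P + y%:P * 'X) * roots_poly b) =
    ((esym_gf b)`_2 * x + (esym_gf b)`_3 * y == 0) &&
    ((esym_gf b)`_1 * x + (esym_gf b)`_2 * y == 0).
  have size_p : (size ((x%:P + y%:P * 'X) * roots_poly b)%R <= k + 2)%N.
    apply: leq_trans (size_polyMleq _ _) _; rewrite size_roots_poly addnS /=.
    by rewrite addnC leq_add2l size_linear_poly.
  rewrite /gap_poly size_p !coef_linear_polyM ?subn_gt0 ?(ltnW k_ge3) // -!subnS.
  by rewrite !coefV //= mulrC [_ * y]mulrC [(esym_gf b)`_1 * _]mulrC [_ * y]mulrC.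
rewrite /schur22 expr2 [(esym_gf b)`_1 * _]mulrC -det2_eq0P.
split=> [[p p0 [gap_p root_p]]|[x [y [xy0 eq1 eq2]]]].
  have [size_p _ _] := and3P gap_p.
  have [x [y pE]] := roots_poly_factor inj_b root_p size_p.
  move: gap_p; rewrite pE gap_linearM => /andP[/eqP eq1 /eqP eq2].
  exists x, y; split=> //; rewrite -negb_and; apply: contra p0 => /andP[/eqP x0 /eqP y0].
  by rewrite pE x0 y0 mul0r add0r mul0r.
exists ((x%:P + y%:P * 'X) * roots_poly b); last first.
  by rewrite gap_linearM eq1 eq2 eqxx; split=> // i; rewrite rootM root_roots_poly orbT.
have V0 : roots_poly b != 0 by rewrite -size_poly_eq0 size_roots_poly.
rewrite mulf_neq0 //; apply: contraTneq xy0 => lin0.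
have := congr1 (fun q : {poly F} => q`_0) lin0.
have := congr1 (fun q : {poly F} => q`_1) lin0.
by rewrite /= !coefD !coefC !coefCM !coefX /= mulr0 mulr1 addr0 add0r => -> ->; rewrite eqxx.
Qed.

Lemma gen_mx_horner k n (alpha : 'I_n -> F) (u : 'rV[F]_k) j :
  (u *m gen_mx k alpha) 0 j = (gen_poly u).[alpha j].
Proof.
rewrite !mxE horner_sum; apply: eq_bigr => r _.
by rewrite !mxE hornerZ hornerXn.
Qed.

Lemma row_free_gen_mx k n (alpha : 'I_n -> F) : (2 <= k)%N -> (k + 2 <= n)%N ->
  injective alpha -> row_free (gen_mx k alpha).
Proof.
move=> k_ge2 le_k2n inj_alpha.
rewrite -kermx_eq0; apply/negPn/rowV0Pn => -[u /sub_kermxP uG0 u0].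
have pu0 : gen_poly u != 0 by rewrite gen_poly_eq0.
have /and3P[size_p _ _] : gap_poly k (gen_poly u) by apply/gen_polyP => //; exists u.
have := @max_poly_roots _ _ [seq alpha j | j <- enum 'I_n] pu0.
rewrite map_inj_uniq ?enum_uniq // size_map size_enum_ord.
have -> : all (root (gen_poly u)) [seq alpha j | j <- enum 'I_n].
  by apply/allP => _ /mapP[j _ ->]; rewrite /root -gen_mx_horner uG0 mxE.
by move=> /(_ isT isT) /leq_trans /(_ size_p); lia.
Qed.

End GapPolynomials.

Section LinearCodes.
Variable F : finFieldType.

Definition information_set k n (G : 'M[F]_(k, n)) (beta : 'I_k -> 'I_n) : Prop :=
  forall u : 'rV[F]_k, (forall i, (u *m G) 0 (beta i) = 0) -> u = 0.

Lemma hweight_vanishing n m (c : 'rV[F]_n) (beta : 'I_m -> 'I_n) :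
  injective beta -> (forall i, c 0 (beta i) = 0) -> (hweight c <= n - m)%N.
Proof.
move=> inj_beta c_beta; rewrite /hweight.
have supp_sub : [set j | c 0 j != 0] \subset ~: (beta @: [set: 'I_m]).
  apply/subsetP => j; rewrite !inE; apply: contra => /imsetP[i _ ->].
  by rewrite c_beta.
apply: leq_trans (subset_leq_card supp_sub) _.
by have := cardsC (beta @: [set: 'I_m]); rewrite card_imset // cardsT !card_ord; lia.
Qed.

Lemma vanishing_positions k n (c : 'rV[F]_n) : (k + hweight c <= n)%N ->
  exists2 beta : 'I_k -> 'I_n, injective beta & forall i, c 0 (beta i) = 0.
Proof.
pose Z := [set j | c 0 j == 0].
have cardZ : #|Z| = (n - hweight c)%N.
  rewrite cardsCs card_ord /hweight; congr (_ - _)%N.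
  by apply: eq_card => j; rewrite !inE.
move=> le_kn; have le_kZ : (k <= #|Z|)%N by rewrite cardZ; lia.
exists (fun i => enum_val (widen_ord le_kZ i)).
  by move=> i j /enum_val_inj /(congr1 val) ij; apply: val_inj.
by move=> i; have := enum_valP (widen_ord le_kZ i); rewrite inE => /eqP.
Qed.

Lemma exists_codeword_vanishing k m n (G : 'M[F]_(k, n)) (g : 'I_m -> 'I_n) :
  (m < k)%N -> exists2 u : 'rV[F]_k, u != 0 & forall i, (u *m G) 0 (g i) = 0.
Proof.
move=> lt_mk; have : kermx (colsub g G) != 0.
  by rewrite kermx_eq0 /row_free neq_ltn (leq_ltn_trans (rank_leq_col _) lt_mk).
case/rowV0Pn => u /sub_kermxP uG0 u0; exists u => // i.
by have := congr1 (fun v : 'rV[F]_m => v 0 i) uG0; rewrite mulmx_colsub !mxE.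
Qed.

Lemma min_dist_le k n (G : 'M[F]_(k, n)) (u : 'rV[F]_k) :
  u *m G != 0 -> (min_dist G <= hweight (u *m G))%N.
Proof.
move=> uG0; rewrite /min_dist -big_filter.
have : u \in [seq v <- index_enum _ | v *m G != 0] by rewrite mem_filter uG0 mem_index_enum.
elim: (filter _ _) => // v s IHs; rewrite inE big_cons => /orP[/eqP <-|/IHs].
  exact: geq_minl.
exact: leq_trans (geq_minr _ _).
Qed.

Lemma min_dist_ge k n (G : 'M[F]_(k, n)) d : (d <= n)%N ->
  (forall u : 'rV[F]_k, u *m G != 0 -> (d <= hweight (u *m G))%N) -> (d <= min_dist G)%N.
Proof.
move=> le_dn le_d; rewrite /min_dist; elim/big_ind: _ => // a b da db.
by rewrite leq_min da db.
Qed.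

Lemma MDS_information_setsP k n (G : 'M[F]_(k, n)) : (0 < k <= n)%N -> row_free G ->
  is_MDS G <-> (forall beta : 'I_k -> 'I_n, injective beta -> information_set G beta).
Proof.
case/andP=> k_gt0 le_kn free_G; have codeword0 u := mulmx_free_eq0 u free_G.
rewrite /is_MDS (eqP free_G); split=> [dG beta inj_beta u uG0|info].
  apply/eqP; apply: contraT; rewrite -codeword0 => uG_neq0.
  by have := min_dist_le uG_neq0; have := hweight_vanishing inj_beta uG0; rewrite dG; lia.
apply/eqP; rewrite eqn_leq; apply/andP; split; last first.
  apply: min_dist_ge => [|u uG0]; first lia.
  rewrite leqNgt; apply/negP => small; move: uG0; rewrite codeword0.
  have [|beta inj_beta vanish] := @vanishing_positions k n (u *m G); first lia.
  by rewrite (info beta inj_beta u vanish) eqxx.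
(* Singleton bound: some nonzero codeword vanishes on k - 1 given positions. *)
have le_k1n : (k.-1 <= n)%N by lia.
have inj_widen : injective (widen_ord le_k1n) by move=> i j /(congr1 val) ij; apply: val_inj.
have [|u u0 vanish] := exists_codeword_vanishing G (widen_ord le_k1n); first lia.
rewrite -codeword0 in u0.
apply: leq_trans (min_dist_le u0) _.
by apply: leq_trans (hweight_vanishing inj_widen vanish) _; lia.
Qed.

Lemma information_set_gen_mxP k n (alpha : 'I_n -> F) (beta : 'I_k -> 'I_n) :
  (3 <= k)%N -> injective alpha -> injective beta ->
  information_set (gen_mx k alpha) beta <-> schur22 (alpha \o beta) != 0.
Proof.
move=> k_ge3 inj_alpha inj_beta; have k_ge2 := ltnW k_ge3.
set b := alpha \o beta; have inj_b : injective b by exact: inj_comp.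
have vanish_gen_mx u : (forall i, (u *m gen_mx k alpha) 0 (beta i) = 0) <->
    (forall i, root (gen_poly u) (b i)).
  by split=> vanish i; move: (vanish i); rewrite /root gen_mx_horner => /eqP.
split=> [info|schur_ne0 u /vanish_gen_mx root_u].
  apply/eqP => /(gap_poly_vanishingP k_ge3 inj_b)[p p0 [/(gen_polyP k_ge2)[u pE] root_p]].
  move: p0 root_p; rewrite pE gen_poly_eq0 => u0 /vanish_gen_mx /info u_eq0.
  by rewrite u_eq0 eqxx in u0.
apply/eqP; move: schur_ne0; apply: contraNT => u0.
apply/eqP/(gap_poly_vanishingP k_ge3 inj_b); exists (gen_poly u).
  by rewrite gen_poly_eq0.
by split=> //; apply/gen_polyP => //; exists u.
Qed.

End LinearCodes.

Unset Implicit Arguments.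
Set Strict Implicit.

Theorem theorem3p4 (F : finFieldType) (n k : nat) (alpha : 'I_n -> F) :
  (3 <= k)%N -> (k <= n - 2)%N -> (n - 2 <= #|F| - 2)%N ->
  injective alpha ->
  is_MDS (gen_mx k alpha) <->
  (forall beta : 'I_k -> 'I_n, injective beta ->
     let b := fun i => alpha (beta i) in
     hsym 2 b ^+ 2 - hsym 1 b * hsym 3 b != 0).
Proof.
(* The bound n <= #|F| on the length already follows from the injectivity of alpha. *)
move=> k_ge3 le_kn _ inj_alpha.
have [k_bounds le_k2n] : (0 < k <= n)%N /\ (k + 2 <= n)%N by lia.
rewrite (MDS_information_setsP k_bounds (row_free_gen_mx (ltnW k_ge3) le_k2n inj_alpha)).
split=> info beta inj_beta; have infoP := information_set_gen_mxP k_ge3 inj_alpha inj_beta.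
  by rewrite /= hsym_schur22; apply/infoP/info.
by apply/infoP; rewrite -hsym_schur22; apply: info.
Qed.
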